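(* Let $S_1(x),\dots,S_n(x) \in \mathbb{C}\{\!\{x\}\!\}$ be Puiseux series with nonnegative valuations. Then \[ \operatorname{val}\bigl(S_1(x)+\dots+S_n(x)\bigr) \le \frac{n(n-1)}{2} + \operatorname{val}\Bigl(W\bigl(S_1(x),\dots,S_n(x)\bigr)\Bigr). \]
   Context: A Puiseux series is a formal series $S(x)=\sum_{i\ge 1} c_i x^{\lambda_i}$ (finite or infinite) with nonzero complex coefficients $c_i$ and a strictly increasing sequence of rational exponents $\lambda_i$ having a common denominator, or the empty series $0$; they form a field $\mathbb{C}\{\!\{x\}\!\}$ under the usual operations. The valuation is $\operatorname{val}(S)=\lambda_1$ and $\operatorname{val}(0)=+\infty$. The formal derivative is $\frac{\partial S}{\partial x}(x)=\sum_i \lambda_i c_i x^{\lambda_i-1}$, and $\frac{\partial^k S}{\partial x^k}$ denotes the $k$-th iterated derivative ($0$-th derivative is $S$). The Wronskian $W(S_1,\dots,S_n)$ is the determinant of the $n\times n$ matrix whose $(i,j)$ entry is $\frac{\partial^{i-1} S_j}{\partial x^{i-1}}(x)$, for $1\le i,j\le n$. *)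

(* Puiseux series over an algebraically closed numeric field R
   (C is the intended instance).  A finite family of Puiseux
   series always has a common denominator d, so we represent series with
   exponents in (1/d)Z:  S = sum_{k>=0} pcoef S k * x^((pshift S + k)/d). *)
From HB Require Import structures.
From mathcomp Require Import all_boot all_order all_algebra all_fingroup.
From Stdlib Require Import ClassicalEpsilon.
Set Implicit Arguments.
Unset Strict Implicit.
Unset Printing Implicit Defensive.
Import Order.TTheory GRing.Theory Num.Theory.
Local Open Scope ring_scope.

Record pser (R : Type) := PSer { pshift : int; pcoef : nat -> R }.

Section Puiseux.
Variable R : numClosedFieldType.
Variable d : nat. (* common denominator of exponents, d > 0 *)

(* coefficient of x^(m/d) *)
Definition coefZ (S : pser R) (m : int) : R :=
  match (m - pshift S)%R with Posz k => pcoef S k | Negz _ => 0 end.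

Definition pzero : pser R := PSer 0 (fun _ => 0).
Definition pone : pser R := PSer 0 (fun k => (k == 0%N)%:R).

Definition padd (S T : pser R) : pser R :=
  let m := if pshift S <= pshift T then pshift S else pshift T in
  PSer m (fun k => coefZ S (m + k%:Z) + coefZ T (m + k%:Z)).

Definition pscale (c : R) (S : pser R) : pser R :=
  PSer (pshift S) (fun k => c * pcoef S k).

Definition pmul (S T : pser R) : pser R :=
  PSer (pshift S + pshift T)
       (fun k => \sum_(i < k.+1) pcoef S i * pcoef T (k - i)%N).

(* formal derivative d/dx:  x^((s+k)/d) |-> ((s+k)/d) x^((s+k-d)/d) *)
Definition pderiv (S : pser R) : pser R :=
  PSer (pshift S - d%:Z)
       (fun k => ((pshift S + k%:Z)%:~R / d%:R) * pcoef S k).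

Definition pderivn (k : nat) (S : pser R) : pser R := iter k pderiv S.

(* Wronskian: det of the matrix with (i,j) entry pderivn i (S j),
   via the Leibniz formula  sum_s (-1)^s prod_i A i (s i). *)
Definition ps_wronskian (n : nat) (S : 'I_n -> pser R) : pser R :=
  \big[padd/pzero]_(s : 'S_n)
     pscale ((-1) ^+ s) (\big[pmul/pone]_(i < n) pderivn i (S (s i))).

Definition ps_sum (n : nat) (S : 'I_n -> pser R) : pser R :=
  \big[padd/pzero]_(i < n) S i.

(* valuation, None = +infinity *)
Definition ps_val (S : pser R) : option rat :=
  match excluded_middle_informative (exists k, pcoef S k != 0) with
  | left H => Some ((pshift S + (ex_minn H)%:Z)%:~R / d%:R)
  | right _ => None
  end.

End Puiseux.

Definition ext_le (a b : option rat) : bool :=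
  match a, b with
  | _, None => true
  | None, Some _ => false
  | Some x, Some y => (x <= y)%R
  end.

Definition ext_addc (c : rat) (a : option rat) : option rat :=
  omap (fun v => (c + v)%R) a.

(** With a common denominator [d], the series become Laurent series in
    [t = x^(1/d)].  If all [S_j] have nonnegative valuation and [S_1 + ... + S_n]
    vanishes below [t^v], truncate each [S_j] at order [v] to a polynomial [P_j];
    the [i]-th derivative acts on these truncations by a linear operator [D_i]
    shifting exponents by [-d i].  So below order [v - d n(n-1)/2] the Wronskian
    agrees with [det (D_i P_j)], whose row sums [D_i (P_1 + ... + P_n)] are
    divisible by [t^v].  Since [det M = sum_j adj(M)_{0j} (sum_k M_jk)], [t^v]
    divides the determinant, and the Wronskian vanishes below
    [t^(v - d n(n-1)/2)]. *)
From Pilot Require Import Defs.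
From HB Require Import structures.
From mathcomp Require Import all_boot all_order all_algebra all_fingroup zify.
Set Implicit Arguments.
Unset Strict Implicit.
Unset Printing Implicit Defensive.
Import Order.TTheory GRing.Theory Num.Theory.
Local Open Scope ring_scope.

(* [Defs.coefZ] is shadowed by the polynomial lemma [coefZ]. *)
Local Notation ps_coef := Defs.coefZ.

Lemma int_le_exists_nat (b m : int) : b <= m -> exists k : nat, m = b + k%:Z.
Proof. by move=> h; exists (absz (m - b)); lia. Qed.

Lemma det_rowsum_expansion (R : comPzRingType) (n : nat) (M : 'M[R]_n) (i0 : 'I_n) :
  \det M = \sum_j \adj M i0 j * \sum_k M j k.
Proof.
have := congr1 (fun A : 'M_(n, 1) => A i0 0) (mulmxA (\adj M) M (const_mx 1)).
rewrite mul_adj_mx mul_scalar_mx !mxE mulr1 => <-.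
apply: eq_bigr => j _; congr (_ * _); rewrite mxE.
by apply: eq_bigr => k _; rewrite mxE mulr1.
Qed.

Lemma triangular_sum_double (n : nat) : ((\sum_(i < n) i).*2 = n * n.-1)%N.
Proof.
rewrite -(big_mkord xpredT (fun i => i)) bin2_sum bin2 even_halfK //.
by case: n => // n; rewrite oddM /= andNb.
Qed.

Lemma ler_intr_div_addn (F : numFieldType) (s w : int) (N d : nat) : (0 < d)%N ->
  s <= (d * N)%N%:Z + w -> (s%:~R / d%:R : F) <= N%:R + w%:~R / d%:R.
Proof.
move=> d_gt0; rewrite -(ler_int F) intrD -pmulrn natrM => le_sw.
by rewrite ler_pdivrMr ?ltr0n // mulrDl divfK ?pnatr_eq0 -?lt0n // mulrC.
Qed.

Section PolyDivisibility.
Variable F : fieldType.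

Lemma dvdXnP (v : nat) (p : {poly F}) :
  reflect (forall k, (k < v)%N -> p`_k = 0) ('X^v %| p).
Proof.
apply: (iffP idP) => [|p_low].
  by rewrite dvdp_eq => /eqP-> k kv; rewrite coefMXn kv.
have take0 : take_poly v p = 0.
  by apply/polyP => k; rewrite coef_take_poly coef0; case: ifP => // /p_low.
by rewrite -(poly_take_drop v p) take0 add0r dvdp_mulIr.
Qed.

Lemma dvdp_det_rowsum (n : nat) (i0 : 'I_n) (M : 'M[{poly F}]_n) (q : {poly F}) :
  (forall i, q %| \sum_j M i j) -> q %| \det M.
Proof.
move=> q_rows; rewrite (det_rowsum_expansion M i0).
apply: (big_ind (fun r => q %| r)) => [|x y|j _]; first exact: dvdp0.
  exact: dvdp_add.
exact: dvdp_mull.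
Qed.

End PolyDivisibility.

Section WindowSums.
Variable R : nzRingType.

Lemma sum_window_sub (f : int -> R) (L L' : int) (K K' : nat) :
  L <= L' -> L' + K'%:Z <= L + K%:Z ->
  (forall a, f a != 0 -> L' <= a <= L' + K'%:Z) ->
  \sum_(i < K.+1) f (L + i%:Z) = \sum_(i < K'.+1) f (L' + i%:Z).
Proof.
move=> le_L le_LK f_supp.
have f0 a : ~~ (L' <= a <= L' + K'%:Z) -> f a = 0.
  by move=> ha; apply/eqP; apply: contraNT ha => /f_supp.
set t := absz (L' - L).
rewrite -!(big_mkord xpredT (fun i : nat => f (_ + i%:Z))).
rewrite (big_cat_nat (n := t)) //=; last lia.
rewrite big_nat big1 ?add0r; last by move=> i /andP[_ lt_it]; apply: f0; lia.
rewrite -{1}(add0n t) big_addn (big_cat_nat (n := K'.+1)) //=; last lia.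
rewrite [X in _ + X = _]big_nat [X in _ + X = _]big1 ?addr0; last first.
  by move=> i /andP[le_Ki _]; apply: f0; lia.
by apply: eq_bigr => i _; congr f; lia.
Qed.

Lemma sum_window_eq (f : int -> R) (L1 L2 : int) (K1 K2 : nat) :
  (forall a, f a != 0 -> [&& L1 <= a, a <= L1 + K1%:Z, L2 <= a & a <= L2 + K2%:Z]) ->
  \sum_(i < K1.+1) f (L1 + i%:Z) = \sum_(i < K2.+1) f (L2 + i%:Z).
Proof.
move=> f_supp; set t := absz (L1 - L2).
rewrite -(@sum_window_sub f (L1 - t%:Z) L1 (2 * t + K1 + K2)) => [|||a /f_supp]; try lia.
by apply: sum_window_sub => [||a /f_supp]; lia.
Qed.

End WindowSums.

Section SeriesCoefficients.
Variable R : numClosedFieldType.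
Implicit Types (X Y : pser R) (b m : int).

Definition vanish_below X b := forall m, m < b -> ps_coef X m = 0.

Lemma vanish_below_pshift X : vanish_below X (pshift X).
Proof.
move=> m lt_m; rewrite /Defs.coefZ; case E: (m - pshift X) => [k|//].
have : 0 <= m - pshift X by rewrite E.
lia.
Qed.

Lemma vanish_below_le X b a : vanish_below X b -> ps_coef X a != 0 -> b <= a.
Proof. by move=> Xb; apply: contraNT; rewrite -ltNge => /Xb ->. Qed.

Lemma ps_coef_pshift X (k : nat) : ps_coef X (pshift X + k%:Z) = pcoef X k.
Proof. by rewrite /Defs.coefZ (addrC (pshift X)) addrK. Qed.

Lemma ps_coef_eq0 X m :
  (forall k : nat, m = pshift X + k%:Z -> pcoef X k = 0) -> ps_coef X m = 0.
Proof.
move=> X0; case: (ltrP m (pshift X)) => [/vanish_below_pshift //|].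
by move=> /int_le_exists_nat[k Em]; rewrite Em (ps_coef_pshift X) X0.
Qed.

Lemma ps_coef_pzero m : ps_coef (@pzero R) m = 0.
Proof. by rewrite /Defs.coefZ; case: (m - _). Qed.

Lemma ps_coef_pone m : ps_coef (@pone R) m = (m == 0)%:R.
Proof. by rewrite /Defs.coefZ /= subr0; case: m. Qed.

Lemma ps_coef_padd X Y m : ps_coef (padd X Y) m = ps_coef X m + ps_coef Y m.
Proof.
rewrite /padd; set s := (if _ then _ else _).
have [leX leY] : s <= pshift X /\ s <= pshift Y by rewrite /s; case: ifP; lia.
case: (ltrP m s) => [lt_ms|/int_le_exists_nat[k ->]]; last exact: ps_coef_pshift.
by rewrite !vanish_below_pshift ?addr0 //=; lia.
Qed.

Lemma ps_coef_ps_sum n (S : 'I_n -> pser R) m :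
  ps_coef (ps_sum S) m = \sum_i ps_coef (S i) m.
Proof.
apply: (big_morph (fun X => ps_coef X m)) => [X Y|]; first exact: ps_coef_padd.
exact: ps_coef_pzero.
Qed.

Lemma ps_coef_pscale c X m : ps_coef (pscale c X) m = c * ps_coef X m.
Proof. by rewrite /Defs.coefZ /=; case: (m - pshift X) => k //; rewrite mulr0. Qed.

Lemma ps_coef_pmul X Y m (L : int) (K : nat) :
  (forall a, ps_coef X a * ps_coef Y (m - a) != 0 -> L <= a <= L + K%:Z) ->
  ps_coef (pmul X Y) m = \sum_(i < K.+1) ps_coef X (L + i%:Z) * ps_coef Y (m - (L + i%:Z)).
Proof.
set f := fun a => ps_coef X a * ps_coef Y (m - a) => f_supp.
have f_shift a : f a != 0 -> pshift X <= a <= m - pshift Y.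
  rewrite /f mulf_eq0 negb_or => /andP[].
  move=> /(vanish_below_le (@vanish_below_pshift X)) ?.
  by move=> /(vanish_below_le (@vanish_below_pshift Y)) ?; lia.
case: (ltrP m (pshift (pmul X Y))) => [lt_m|/int_le_exists_nat[k Em]].
  rewrite (vanish_below_pshift lt_m) big1 // => i _.
  by apply/eqP/contraT => /f_shift; move: lt_m => /=; lia.
rewrite {1}Em (ps_coef_pshift (pmul X Y)) /=; move: Em => /= Em.
transitivity (\sum_(i < k.+1) f (pshift X + i%:Z)).
  apply: eq_bigr => i _; rewrite /f (ps_coef_pshift X) -(ps_coef_pshift Y).
  by congr (_ * ps_coef Y _); have := ltn_ord i; lia.
by apply: sum_window_eq => a fa; have := f_supp a fa; have := f_shift a fa; lia.
Qed.

Variable d : nat.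

Lemma ps_coef_pderiv X m :
  ps_coef (pderiv d X) m = (m + d%:Z)%:~R / d%:R * ps_coef X (m + d%:Z).
Proof.
case: (ltrP (m + d%:Z) (pshift X)) => [lt_m|/int_le_exists_nat[k Em]].
  by rewrite !vanish_below_pshift ?mulr0 //=; lia.
have Em' : m = pshift (pderiv d X) + k%:Z by rewrite /=; lia.
by rewrite {1}Em' (ps_coef_pshift (pderiv d X)) Em (ps_coef_pshift X).
Qed.

End SeriesCoefficients.

Section Truncation.
Variables (R : numClosedFieldType) (d : nat).
Implicit Types (X Y : pser R) (p q : {poly R}) (b : int) (T : nat).

(* With [t = x^(1/d)]: [X = t^b p(t) + O(t^(b+T))]. *)
Definition ps_approx b T X p :=
  vanish_below X b /\ forall k, (k < T)%N -> ps_coef X (b + k%:Z) = p`_k.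

Lemma ps_approx_pzero b T : ps_approx b T (@pzero R) 0.
Proof. by split => [m _|k _]; rewrite ps_coef_pzero ?coef0. Qed.

Lemma ps_approx_pone T : ps_approx 0 T (@pone R) 1.
Proof.
split => [m lt_m0|k _]; rewrite ps_coef_pone ?coef1 ?add0r //.
by rewrite (lt_eqF lt_m0).
Qed.

Lemma ps_approx_padd b T X Y p q :
  ps_approx b T X p -> ps_approx b T Y q -> ps_approx b T (padd X Y) (p + q).
Proof.
move=> [Xb Xp] [Yb Yq]; split => [m lt_mb|k lt_kT].
  by rewrite ps_coef_padd Xb ?Yb ?addr0.
by rewrite ps_coef_padd Xp ?Yq ?coefD.
Qed.

Lemma ps_approx_pscale b T c X p :
  ps_approx b T X p -> ps_approx b T (pscale c X) (c *: p).
Proof.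
move=> [Xb Xp]; split => [m lt_mb|k lt_kT]; rewrite ps_coef_pscale.
  by rewrite Xb ?mulr0.
by rewrite Xp ?coefZ.
Qed.

Lemma ps_approx_pmul b1 b2 T X Y p q :
  ps_approx b1 T X p -> ps_approx b2 T Y q -> ps_approx (b1 + b2) T (pmul X Y) (p * q).
Proof.
move=> [Xb Xp] [Yb Yq].
have supp m a : ps_coef X a * ps_coef Y (m - a) != 0 -> b1 <= a <= m - b2.
  rewrite mulf_eq0 negb_or => /andP[/(vanish_below_le Xb) ? /(vanish_below_le Yb) ?].
  lia.
split => [m lt_m|k lt_kT].
  rewrite (ps_coef_pmul (L := b1) (K := 0)) => [|a /supp]; last lia.
  by rewrite big1 // => i _; apply/eqP/contraT => /supp; lia.
rewrite (ps_coef_pmul (L := b1) (K := k)) => [|a /supp]; last lia.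
rewrite coefM; apply: eq_bigr => i _; have := ltn_ord i => lt_ik.
rewrite Xp; last lia.
by rewrite -Yq; last lia; congr (_ * ps_coef Y _); lia.
Qed.

Lemma ps_approx_bigadd (I : Type) (r : seq I) (P : pred I) b T
    (F : I -> pser R) (f : I -> {poly R}) :
  (forall i, ps_approx b T (F i) (f i)) ->
  ps_approx b T (\big[@padd R/@pzero R]_(i <- r | P i) F i) (\sum_(i <- r | P i) f i).
Proof.
move=> Ff; apply: (big_ind2 (fun X q => ps_approx b T X q)) => //.
  exact: ps_approx_pzero.
by move=> *; apply: ps_approx_padd.
Qed.

Lemma ps_approx_bigmul (I : Type) (r : seq I) (b : I -> int) T
    (F : I -> pser R) (f : I -> {poly R}) :
  (forall i, ps_approx (b i) T (F i) (f i)) ->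
  ps_approx (\sum_(i <- r) b i) T (\big[@pmul R/@pone R]_(i <- r) F i) (\prod_(i <- r) f i).
Proof.
move=> Ff; elim: r => [|i r IHr]; first by rewrite !big_nil; apply: ps_approx_pone.
by rewrite !big_cons; apply: ps_approx_pmul.
Qed.

(* [pderiv] maps [t^b p(t)] to [t^(b-d) (pderiv_poly b p)(t)]. *)
Definition pderiv_poly b p : {poly R} :=
  \poly_(k < size p) ((b + k%:Z)%:~R / d%:R * p`_k).

Lemma coef_pderiv_poly b p k : (pderiv_poly b p)`_k = (b + k%:Z)%:~R / d%:R * p`_k.
Proof. by rewrite coef_poly; case: ltnP => // /(nth_default 0) ->; rewrite mulr0. Qed.

Lemma ps_approx_pderiv b T X p :
  ps_approx b T X p -> ps_approx (b - d%:Z) T (pderiv d X) (pderiv_poly b p).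
Proof.
move=> [Xb Xp]; split => [m lt_m|k lt_kT]; rewrite ps_coef_pderiv.
  by rewrite Xb ?mulr0 //; lia.
rewrite coef_pderiv_poly -Xp //; congr (_%:~R / _ * ps_coef X _); lia.
Qed.

Fixpoint pderivn_poly (i : nat) p : {poly R} :=
  if i is i'.+1 then pderiv_poly (- (d * i')%N%:Z) (pderivn_poly i' p) else p.

Lemma ps_approx_pderivn T i X p :
  ps_approx 0 T X p -> ps_approx (- (d * i)%N%:Z) T (pderivn d i X) (pderivn_poly i p).
Proof.
move=> Xp; elim: i => [|i IHi] /=; first by rewrite muln0.
by have := ps_approx_pderiv IHi; rewrite mulnS PoszD opprD addrC.
Qed.

Lemma pderivn_poly_sum (I : Type) (r : seq I) i (f : I -> {poly R}) :
  pderivn_poly i (\sum_(j <- r) f j) = \sum_(j <- r) pderivn_poly i (f j).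
Proof.
elim: i => [|i IHi] //=; apply/polyP => k.
rewrite coef_pderiv_poly IHi !coef_sum mulr_sumr.
by apply: eq_bigr => j _; rewrite coef_pderiv_poly.
Qed.

Lemma dvdXn_pderivn_poly (v : nat) i p : 'X^v %| p -> 'X^v %| pderivn_poly i p.
Proof.
move=> /dvdXnP p_low; apply/dvdXnP => k lt_kv.
by elim: i => [|i IHi] /=; rewrite ?p_low // coef_pderiv_poly IHi mulr0.
Qed.

End Truncation.

Section Wronskian.
Variables (R : numClosedFieldType) (d n : nat).
Variable S : 'I_n -> pser R.

Lemma ps_approx_wronskian T (P : 'I_n -> {poly R}) :
  (forall j, ps_approx 0 T (S j) (P j)) ->
  ps_approx (- (d * \sum_(i < n) i)%N%:Z) T (ps_wronskian d S)
    (\det (\matrix_(i, j) pderivn_poly d i (P j))).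
Proof.
move=> SP; rewrite /ps_wronskian /determinant.
apply: ps_approx_bigadd => s; rewrite mulr_sign -scaler_sign.
apply: ps_approx_pscale.
have -> : - (d * \sum_(i < n) i)%N%:Z = \sum_(i < n) - (d * i)%N%:Z.
  by rewrite sumrN big_distrr /= -(big_morph Posz PoszD erefl).
by apply: ps_approx_bigmul => i; rewrite mxE; apply: ps_approx_pderivn.
Qed.

Lemma ps_wronskian_vanish_below (i0 : 'I_n) (v : nat) :
  (forall j, vanish_below (S j) 0) -> vanish_below (ps_sum S) v%:Z ->
  vanish_below (ps_wronskian d S) (v%:Z - (d * \sum_(i < n) i)%N%:Z).
Proof.
move=> S_ge0 sum_low.
pose P j := \poly_(k < v) ps_coef (S j) k%:Z.
have SP j : ps_approx 0 v (S j) (P j).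
  by split=> [|k lt_kv]; rewrite ?coef_poly ?lt_kv ?add0r.
have [Wb WM] := ps_approx_wronskian SP.
have X_det : 'X^v %| \det (\matrix_(i, j) pderivn_poly d i (P j)).
  apply: (dvdp_det_rowsum i0) => i.
  under eq_bigr do rewrite mxE.
  rewrite -pderivn_poly_sum; apply: dvdXn_pderivn_poly; apply/dvdXnP => k lt_kv.
  rewrite coef_sum (eq_bigr (fun j => ps_coef (S j) k%:Z)) => [|j _]; last first.
    by rewrite coef_poly lt_kv.
  by rewrite -ps_coef_ps_sum sum_low //; lia.
move/dvdXnP: X_det => det_low m lt_m.
case: (ltrP m (- (d * \sum_(i < n) i)%N%:Z)) => [/Wb //|/int_le_exists_nat[k Em]].
by rewrite Em WM ?det_low //; lia.
Qed.

End Wronskian.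

Section Valuation.
Variables (R : numClosedFieldType) (d : nat).

Variant ps_val_spec (X : pser R) : option rat -> Prop :=
  | PsValInfty of (forall m, ps_coef X m = 0) : ps_val_spec X None
  | PsValFinite m0 of ps_coef X m0 != 0 & vanish_below X m0 :
      ps_val_spec X (Some (m0%:~R / d%:R)).

Lemma ps_valP (X : pser R) : ps_val_spec X (ps_val d X).
Proof.
rewrite /ps_val; case: ClassicalEpsilon.excluded_middle_informative => [Xnz|X0].
  case: ex_minnP => k Xk k_min; apply: PsValFinite; first by rewrite (ps_coef_pshift X).
  by move=> m lt_m; apply: ps_coef_eq0 => j Em; apply/eqP/contraT => /k_min; lia.
apply: PsValInfty => m; apply: ps_coef_eq0 => j _.
by apply/eqP/contraT => Xj; case: X0; exists j.
Qed.

End Valuation.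

Theorem mainTheorem2 (R : numClosedFieldType) (d n : nat) (hd : (0 < d)%N)
  (hn : (0 < n)%N) (S : 'I_n -> pser R)
  (hS : forall i, ext_le (Some 0) (ps_val d (S i))) :
  ext_le (ps_val d (ps_sum S))
    (ext_addc ((n * (n - 1))%:R / 2%:R) (ps_val d (ps_wronskian d S))).
Proof.
have S_ge0 j : vanish_below (S j) 0.
  move: (hS j); case: ps_valP => [S0 _ m _|m0 _ Sm0 /=]; first exact: S0.
  rewrite pmulr_lge0 ?invr_gt0 ?ltr0n // ler0z => m0_ge0 m lt_m0.
  by apply: Sm0; lia.
have W_low v := ps_wronskian_vanish_below (d := d) (v := v) (Ordinal hn) S_ge0.
have N_eq : (n * (n - 1))%:R / 2%:R = (\sum_(i < n) i)%N%:R :> rat.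
  by rewrite subn1 -triangular_sum_double -mul2n natrM mulrC mulKf ?pnatr_eq0.
case: (ps_valP d (ps_wronskian d S)) => [_|w0 W_w0 _]; first by case: ps_val.
case: (ps_valP d (ps_sum S)) => [sum0|s0 sum_s0 sum_low].
  pose v := (absz (w0 + (d * \sum_(i < n) i)%N%:Z)).+1.
  by have := vanish_below_le (W_low v (fun m _ => sum0 m)) W_w0; lia.
have s0_ge0 : 0 <= s0.
  apply: vanish_below_le sum_s0 => m lt_m.
  by rewrite ps_coef_ps_sum big1 // => j _; apply: S_ge0.
have /W_low /vanish_below_le /(_ W_w0) : vanish_below (ps_sum S) (absz s0).
  by move=> m lt_m; apply: sum_low; lia.
rewrite /= N_eq => le_w0; apply: ler_intr_div_addn => //.
by move: le_w0; rewrite gez0_abs // lerBlDr addrC.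
Qed.
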